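(* Let $S=\{e_1,\dots,e_k\}\subseteq\mathbb{N}$ be a set of $k\geq1$ distinct elements with $e_k=\max(S)$, and let $b\geq 1$. Then $$\int_{1-\frac1b}^{1}\sqrt{\mathcal{I}(g_S)(t)}\,\mathrm{d}t\leq\frac{2(k+1)e_k}{b}.$$
   Context: $\mathbb{N}=\{0,1,2,\dots\}$. Define $g_S(t)=\sum_{e\in S}t^{2e}$. For a positive twice differentiable function $g$ on an interval contained in $(0,\infty)$, define $\mathcal{I}(g)(t):=(\log g)''(t)+\frac{(\log g)'(t)}{t}$ (this is nonnegative for $g=g_S$). *)

From Stdlib Require Import Reals List.
Open Scope R_scope.

(* A finite set S of naturals is represented by a duplicate-free list. *)
Definition gS (S : list nat) (t : R) : R :=
  fold_right (fun e acc => t ^ (2 * e) + acc) 0 S.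

(* max(S) (0 for the empty list, never used there) *)
Definition maxS (S : list nat) : nat := fold_right Nat.max 0%nat S.

Definition log_derivs (g dl ddl : R -> R) : Prop :=
  forall t, 0 < t ->
    derivable_pt_lim (fun s => ln (g s)) t (dl t) /\
    derivable_pt_lim dl t (ddl t).

Definition Iop (dl ddl : R -> R) (t : R) : R := ddl t + dl t / t.

(* Let m = min S and L = S - m, so that g_S(t) = t^(2m) g_L(t) with 0 in L, hence g_L >= 1.
   With the moments M_k = sum_(d in L) (2d)^k t^(2d), the factor t^(2m) drops out of I and
   I(g_S) = (M_0 M_2 - M_1^2) / (t^2 M_0^2).  By Lagrange's identity the numerator is t^2 times
   a polynomial, so sqrt(I) extends continuously to t = 0.  Dropping M_1^2 and using M_0 >= 1,
   I <= M_2 / t^2 = sum (2d t^(d-1))^2 <= (sum 2d t^(d-1))^2, and this majorant integrates over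
   [1 - 1/b, 1] to sum 2 (1 - (1 - 1/b)^d) <= 2 k e_k / b by Bernoulli's inequality. *)

From Coquelicot Require Import Coquelicot.
From Stdlib Require Import Reals List Lra Lia.
Open Scope R_scope.

Definition lsum (L : list nat) (f : nat -> R) : R :=
  fold_right (fun d acc => f d + acc) 0 L.

Lemma lsum_ext (L : list nat) (f g : nat -> R) : (forall d, f d = g d) -> lsum L f = lsum L g.
Proof. intros H; induction L as [|d L' IH]; simpl; congruence. Qed.

Lemma lsum_plus (L : list nat) (f g : nat -> R) : lsum L (fun d => f d + g d) = lsum L f + lsum L g.
Proof. induction L; simpl; lra. Qed.

Lemma lsum_minus (L : list nat) (f g : nat -> R) : lsum L (fun d => f d - g d) = lsum L f - lsum L g.
Proof. induction L; simpl; lra. Qed.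

Lemma lsum_scal_l (L : list nat) (c : R) (f : nat -> R) : c * lsum L f = lsum L (fun d => c * f d).
Proof. induction L; simpl; lra. Qed.

Lemma lsum_scal_r (L : list nat) (c : R) (f : nat -> R) : lsum L f * c = lsum L (fun d => f d * c).
Proof. induction L; simpl; lra. Qed.

Lemma lsum_const (L : list nat) (c : R) : lsum L (fun _ => c) = INR (length L) * c.
Proof.
  induction L as [|d L' IH]; [simpl; ring|].
  cbn [lsum fold_right length]. rewrite S_INR. fold (lsum L' (fun _ => c)). rewrite IH. ring.
Qed.

Lemma lsum_le (L : list nat) (f g : nat -> R) :
  (forall d, In d L -> f d <= g d) -> lsum L f <= lsum L g.
Proof.
  intros H; induction L as [|d L' IH]; simpl; [lra|].
  apply Rplus_le_compat; [apply H; simpl; auto | apply IH; intros; apply H; simpl; auto].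
Qed.

Lemma lsum_nonneg (L : list nat) (f : nat -> R) : (forall d, 0 <= f d) -> 0 <= lsum L f.
Proof. intros H; induction L; simpl; [lra|]. specialize (H a); lra. Qed.

Lemma lsum_ge_term (L : list nat) (f : nat -> R) (d : nat) :
  (forall d, 0 <= f d) -> In d L -> f d <= lsum L f.
Proof.
  intros Hf Hd; induction L as [|e L' IH]; simpl in *; [tauto|].
  destruct Hd as [<-|Hd].
  - pose proof (lsum_nonneg L' f Hf); unfold lsum in *; lra.
  - specialize (Hf e); specialize (IH Hd); lra.
Qed.

Lemma lsum_sqr_le (L : list nat) (f : nat -> R) :
  (forall d, 0 <= f d) -> lsum L (fun d => f d ^ 2) <= lsum L f ^ 2.
Proof.
  intros H; induction L as [|d L' IH]; [simpl; lra|].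
  cbn [lsum fold_right]; fold (lsum L' f) (lsum L' (fun d => f d ^ 2)).
  pose proof (lsum_nonneg L' f H); specialize (H d). nra.
Qed.

Lemma lsum_derive (L : list nat) (f : nat -> R -> R) (f' : nat -> R) (x : R) :
  (forall d, is_derive (f d) x (f' d)) ->
  is_derive (fun s => lsum L (fun d => f d s)) x (lsum L f').
Proof.
  intros H; induction L as [|d L' IH]; simpl.
  - apply (is_derive_const (K := R_AbsRing) (0 : R)).
  - apply (is_derive_plus (f d) (fun s => lsum L' (fun d => f d s))); auto.
Qed.

Lemma lsum_continuous (L : list nat) (f : nat -> R -> R) (x : R) :
  (forall d, continuous (f d) x) -> continuous (fun s => lsum L (fun d => f d s)) x.
Proof.
  intros H; induction L as [|d L' IH]; simpl.
  - apply continuous_const.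
  - apply (continuous_plus (f d) (fun s => lsum L' (fun d => f d s))); auto.
Qed.

Lemma lsum_mult (A B : list nat) (f g : nat -> R) :
  lsum A f * lsum B g = lsum A (fun i => lsum B (fun j => f i * g j)).
Proof. rewrite lsum_scal_r. apply lsum_ext. intros i. apply lsum_scal_l. Qed.

Lemma lsum_swap (A B : list nat) (F : nat -> nat -> R) :
  lsum A (fun i => lsum B (fun j => F i j)) = lsum B (fun j => lsum A (fun i => F i j)).
Proof.
  induction A as [|a A IH]; simpl.
  - induction B; simpl; lra.
  - fold (lsum A (fun i => lsum B (fun j => F i j))). rewrite IH, <- lsum_plus. reflexivity.
Qed.

Lemma lsum2_symmetrize (L : list nat) (F : nat -> nat -> R) :
  lsum L (fun i => lsum L (fun j => F i j + F j i))
  = 2 * lsum L (fun i => lsum L (fun j => F i j)).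
Proof.
  rewrite (lsum_ext L _ (fun i => lsum L (fun j => F i j) + lsum L (fun j => F j i)))
    by (intros; apply lsum_plus).
  rewrite lsum_plus, (lsum_swap L L (fun j i => F i j)). ring.
Qed.

Definition moment (k : nat) (L : list nat) (t : R) : R :=
  lsum L (fun d => (2 * INR d) ^ k * t ^ (2 * d)).

(* The exponent [2 * i + 2 * j - 2] is truncated only for [i = j = 0], where the coefficient
   vanishes. *)
Definition dispersion (L : list nat) (t : R) : R :=
  lsum L (fun i => lsum L (fun j => 2 * (INR i - INR j) ^ 2 * t ^ (2 * i + 2 * j - 2))).

Lemma is_derive_pow_even (d : nat) (t : R) :
  t <> 0 -> is_derive (fun s => s ^ (2 * d)) t (2 * INR d * t ^ (2 * d) / t).
Proof.
  intros Ht. eapply is_derive_ext; [reflexivity|].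
  replace (2 * INR d * t ^ (2 * d) / t) with (INR (2 * d) * t ^ pred (2 * d)).
  - apply is_derive_Reals, derivable_pt_lim_pow.
  - destruct d as [|d]; [simpl; field; auto|].
    replace (2 * S d)%nat with (S (S (2 * d))) by lia.
    rewrite !S_INR, mult_INR. simpl pred. simpl (t ^ S _). simpl (INR 2). field. auto.
Qed.

Lemma is_derive_moment (k : nat) (L : list nat) (t : R) :
  t <> 0 -> is_derive (moment k L) t (moment (S k) L t / t).
Proof.
  intros Ht. unfold moment.
  replace (lsum L _ / t) with (lsum L (fun d => (2 * INR d) ^ k * (2 * INR d * t ^ (2 * d) / t))).
  - apply (lsum_derive L (fun d s => (2 * INR d) ^ k * s ^ (2 * d))).
    intros d. apply is_derive_scal, is_derive_pow_even, Ht.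
  - unfold Rdiv. rewrite lsum_scal_r. apply lsum_ext. intros d. simpl. ring.
Qed.

Lemma moment0_ge1 (L : list nat) (t : R) : In 0%nat L -> 1 <= moment 0 L t.
Proof.
  intros H0. replace 1 with ((2 * INR 0) ^ 0 * t ^ (2 * 0)) by (simpl; ring).
  apply (lsum_ge_term L (fun d => (2 * INR d) ^ 0 * t ^ (2 * d))); auto.
  intros d. rewrite pow_mult. simpl. apply Rmult_le_pos; [lra|]. apply pow_le. nra.
Qed.

Lemma dispersion_term (t : R) (i j : nat) :
  t ^ 2 * (2 * (INR i - INR j) ^ 2 * t ^ (2 * i + 2 * j - 2))
  = 2 * (INR i - INR j) ^ 2 * (t ^ (2 * i) * t ^ (2 * j)).
Proof.
  destruct (Nat.eq_dec (i + j) 0) as [H|H].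
  - replace i with 0%nat by lia. replace j with 0%nat by lia. simpl. ring.
  - assert (E : t ^ 2 * t ^ (2 * i + 2 * j - 2) = t ^ (2 * i) * t ^ (2 * j)).
    { rewrite <- !pow_add. f_equal. lia. }
    rewrite <- E. ring.
Qed.

Lemma moment_lagrange (L : list nat) (t : R) :
  moment 0 L t * moment 2 L t - moment 1 L t ^ 2 = t ^ 2 * dispersion L t.
Proof.
  set (F i j := t ^ (2 * i) * t ^ (2 * j) * (4 * INR j ^ 2 - 4 * INR i * INR j)).
  transitivity (lsum L (fun i => lsum L (fun j => F i j))).
  - unfold moment. rewrite <- Rsqr_pow2; unfold Rsqr; rewrite !lsum_mult, <- lsum_minus.
    apply lsum_ext. intros i. rewrite <- lsum_minus. apply lsum_ext. intros j.
    unfold F. simpl. ring.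
  - apply (Rmult_eq_reg_l 2); [|lra]. rewrite <- lsum2_symmetrize.
    unfold dispersion. rewrite !lsum_scal_l.
    apply lsum_ext. intros i. rewrite !lsum_scal_l. apply lsum_ext. intros j.
    rewrite dispersion_term. unfold F. ring.
Qed.

Lemma exists_list_min (S : list nat) :
  S <> nil -> exists m, In m S /\ forall e, In e S -> (m <= e)%nat.
Proof.
  induction S as [|a S IH]; intros HS; [congruence|].
  destruct S as [|c S].
  - exists a. split; [simpl; auto|]. intros e [<-|[]]. lia.
  - destruct IH as [m [Hm Hmin]]; [discriminate|].
    destruct (Nat.le_ge_cases a m) as [Ham|Hma].
    + exists a. split; [simpl; auto|]. intros e [<-|He]; [lia|]. specialize (Hmin e He). lia.
    + exists m. split; [simpl; auto|]. intros e [<-|He]; [lia|]. apply Hmin, He.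
Qed.

Definition shift (m : nat) (S : list nat) : list nat := map (fun e => (e - m)%nat) S.

Lemma In_0_shift (S : list nat) (m : nat) : In m S -> In 0%nat (shift m S).
Proof.
  intros Hm. replace 0%nat with (m - m)%nat by lia.
  apply (in_map (fun e => (e - m)%nat)), Hm.
Qed.

Lemma shift_le_maxS (S : list nat) (m d : nat) : In d (shift m S) -> (d <= maxS S)%nat.
Proof.
  intros Hd. apply in_map_iff in Hd as [e [<- He]].
  assert (Hall : Forall (fun k => (k <= list_max S)%nat) S) by (apply list_max_le; lia).
  rewrite Forall_forall in Hall. specialize (Hall e He). change (maxS S) with (list_max S). lia.
Qed.

Lemma gS_shift (S : list nat) (m : nat) (t : R) :
  (forall e, In e S -> (m <= e)%nat) -> gS S t = t ^ (2 * m) * moment 0 (shift m S) t.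
Proof.
  intros Hmin; induction S as [|e S IH]; [simpl; unfold moment, lsum; simpl; ring|].
  assert (Hme : (m <= e)%nat) by (apply Hmin; simpl; auto).
  change (t ^ (2 * e) + gS S t
    = t ^ (2 * m) * ((2 * INR (e - m)) ^ 0 * t ^ (2 * (e - m)) + moment 0 (shift m S) t)).
  rewrite IH by (intros; apply Hmin; simpl; auto).
  replace (2 * e)%nat with (2 * m + 2 * (e - m))%nat by lia. rewrite pow_add. simpl. ring.
Qed.

Section LogDerivatives.

Variables (S : list nat) (m : nat).
Hypotheses (Hm : In m S) (Hmin : forall e, In e S -> (m <= e)%nat).

Definition dlog_gS (t : R) : R :=
  (2 * INR m + moment 1 (shift m S) t / moment 0 (shift m S) t) / t.

Lemma moment0_shift_ge1 (t : R) : 1 <= moment 0 (shift m S) t.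
Proof. apply moment0_ge1, In_0_shift, Hm. Qed.

Lemma is_derive_ln_gS (t : R) : 0 < t -> is_derive (fun s => ln (gS S s)) t (dlog_gS t).
Proof.
  intros Ht. pose proof (moment0_shift_ge1 t) as H1.
  assert (Hpow : 0 < t ^ (2 * m)) by (apply pow_lt, Ht).
  assert (Hg : is_derive (gS S) t
     (2 * INR m * t ^ (2 * m) / t * moment 0 (shift m S) t
      + t ^ (2 * m) * (moment 1 (shift m S) t / t))).
  { apply (is_derive_ext (fun s => s ^ (2 * m) * moment 0 (shift m S) s)).
    - intros s. symmetry. apply gS_shift, Hmin.
    - apply (is_derive_mult (fun s => s ^ (2 * m)) (moment 0 (shift m S))).
      + apply is_derive_pow_even. lra.
      + apply is_derive_moment. lra.
      + intros; apply Rmult_comm. }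
  eapply eq_ind.
  - apply (is_derive_comp ln (gS S)); [|exact Hg].
    apply is_derive_ln. rewrite (gS_shift S m) by exact Hmin. apply Rmult_lt_0_compat; lra.
  - rewrite (gS_shift S m) by exact Hmin. unfold dlog_gS, scal; simpl; unfold mult; simpl.
    field. split; [lra|]. split; [lra|]. apply Rgt_not_eq, pow_lt, Ht.
Qed.

Lemma is_derive_dlog_gS (t : R) : 0 < t ->
  is_derive dlog_gS t
    (dispersion (shift m S) t / moment 0 (shift m S) t ^ 2 - dlog_gS t / t).
Proof.
  intros Ht. pose proof (moment0_shift_ge1 t) as H1.
  unfold dlog_gS at 1. set (L := shift m S) in *. eapply eq_ind.
  - apply is_derive_div; [|apply is_derive_id|lra].
    apply (is_derive_plus (fun _ => 2 * INR m)); [apply (is_derive_const (K := R_AbsRing))|].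
    apply is_derive_div; [apply is_derive_moment; lra..|lra].
  - assert (E := moment_lagrange L t).
    replace (dispersion L t) with ((moment 0 L t * moment 2 L t - moment 1 L t ^ 2) / t ^ 2)
      by (rewrite E; field; lra).
    unfold dlog_gS, plus, zero, one; simpl. fold L. field. lra.
Qed.

Lemma Iop_gS (dl ddl : R -> R) (t : R) :
  log_derivs (gS S) dl ddl -> 0 < t ->
  Iop dl ddl t = dispersion (shift m S) t / moment 0 (shift m S) t ^ 2.
Proof.
  intros Hlog Ht.
  assert (Hdl : forall s, 0 < s -> dl s = dlog_gS s).
  { intros s Hs. destruct (Hlog s Hs) as [H _]. apply is_derive_Reals in H.
    rewrite <- (is_derive_unique _ _ _ H). apply is_derive_unique, is_derive_ln_gS, Hs. }
  assert (Hddl : is_derive dl t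
    (dispersion (shift m S) t / moment 0 (shift m S) t ^ 2 - dlog_gS t / t)).
  { apply (is_derive_ext_loc dlog_gS); [|apply is_derive_dlog_gS, Ht].
    exists (mkposreal t Ht). intros s Hs. apply Rabs_def2 in Hs.
    symmetry. apply Hdl. unfold minus, plus, opp in Hs; simpl in Hs. lra. }
  destruct (Hlog t Ht) as [_ H2]. apply is_derive_Reals in H2.
  unfold Iop. rewrite (Hdl t Ht), <- (is_derive_unique _ _ _ H2), (is_derive_unique _ _ _ Hddl).
  ring.
Qed.

End LogDerivatives.

Definition majorant (L : list nat) (t : R) : R := lsum L (fun d => 2 * (INR d * t ^ pred d)).

Definition majorant_primitive (L : list nat) (t : R) : R := lsum L (fun d => 2 * t ^ d).

Lemma moment2_le (L : list nat) (t : R) : 0 <= t -> moment 2 L t <= (t * majorant L t) ^ 2.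
Proof.
  intros Ht.
  replace (t * majorant L t) with (lsum L (fun d => 2 * INR d * t ^ d)).
  - unfold moment. eapply Rle_trans; [|apply lsum_sqr_le].
    + apply Req_le, lsum_ext. intros d. rewrite Nat.mul_comm, pow_mult. ring.
    + intros d. pose proof (pos_INR d). pose proof (pow_le t d Ht). nra.
  - unfold majorant. rewrite lsum_scal_l. apply lsum_ext. intros [|d]; simpl; ring.
Qed.

Lemma dispersion_div_le (L : list nat) (t : R) : In 0%nat L -> 0 < t ->
  dispersion L t / moment 0 L t ^ 2 <= majorant L t ^ 2.
Proof.
  intros H0 Ht. pose proof (moment0_ge1 L t H0) as H1.
  assert (H2 : 0 <= moment 2 L t).
  { unfold moment. apply lsum_nonneg. intros d. rewrite pow_mult. apply Rmult_le_pos.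
    - apply pow2_ge_0.
    - apply pow_le, pow2_ge_0. }
  assert (Hlag := moment_lagrange L t).
  assert (Hmom2 := moment2_le L t (Rlt_le _ _ Ht)).
  assert (Ht2 : 0 < t ^ 2 * moment 0 L t ^ 2) by (apply Rmult_lt_0_compat; apply pow_lt; lra).
  apply Rmult_le_reg_r with (t ^ 2 * moment 0 L t ^ 2); [exact Ht2|].
  replace (dispersion L t / moment 0 L t ^ 2 * (t ^ 2 * moment 0 L t ^ 2))
    with (moment 0 L t * moment 2 L t - moment 1 L t ^ 2) by (rewrite Hlag; field; lra).
  assert (moment 0 L t * moment 2 L t <= moment 0 L t ^ 2 * (t * majorant L t) ^ 2).
  { apply Rle_trans with (moment 0 L t ^ 2 * moment 2 L t).
    { assert (0 <= moment 0 L t * moment 2 L t * (moment 0 L t - 1))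
        by (apply Rmult_le_pos; [apply Rmult_le_pos|]; lra).
      nra. }
    apply Rmult_le_compat_l; [nra | exact Hmom2]. }
  nra.
Qed.

Lemma continuous_pow (n : nat) (x : R) : continuous (fun s => s ^ n) x.
Proof.
  apply (ex_derive_continuous (K := R_AbsRing) (V := R_NormedModule)).
  eexists. apply is_derive_Reals, derivable_pt_lim_pow.
Qed.

Lemma continuous_scal_pow (c : R) (n : nat) (x : R) : continuous (fun s => c * s ^ n) x.
Proof. apply (continuous_mult (fun _ => c)); [apply continuous_const | apply continuous_pow]. Qed.

Lemma continuous_sqrt_dispersion (L : list nat) (x : R) : In 0%nat L ->
  continuous (fun t => sqrt (dispersion L t / moment 0 L t ^ 2)) x.
Proof.
  intros H0. apply continuous_sqrt_comp.
  assert (HM : continuous (moment 0 L) x)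
    by (apply (lsum_continuous L (fun d s => _ * s ^ (2 * d))); intros; apply continuous_scal_pow).
  apply (continuous_mult (dispersion L) (fun t => / moment 0 L t ^ 2)).
  - apply (lsum_continuous L (fun i s => lsum L (fun j => _ * s ^ (2 * i + 2 * j - 2)))).
    intros i. apply (lsum_continuous L (fun j s => _ * s ^ (2 * i + 2 * j - 2))).
    intros j. apply continuous_scal_pow.
  - apply continuous_Rinv_comp.
    + apply (continuous_mult (moment 0 L) (fun t => moment 0 L t ^ 1)); [exact HM|].
      apply (continuous_mult (moment 0 L) (fun _ => 1)); [exact HM | apply continuous_const].
    + pose proof (moment0_ge1 L x H0). apply pow_nonzero. lra.
Qed.

Lemma ex_RInt_sqrt_dispersion (L : list nat) (a b : R) : In 0%nat L ->
  ex_RInt (fun t => sqrt (dispersion L t / moment 0 L t ^ 2)) a b.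
Proof.
  intros H0. apply (ex_RInt_continuous (V := R_CompleteNormedModule)).
  intros; apply continuous_sqrt_dispersion, H0.
Qed.

Lemma one_sub_pow_le (a : R) (d : nat) : 0 <= a <= 1 -> 1 - a ^ d <= INR d * (1 - a).
Proof.
  intros Ha. induction d as [|d IH]; [simpl; lra|].
  rewrite S_INR. simpl. pose proof (pow_le a d (proj1 Ha)).
  pose proof (pow_incr a 1 d Ha) as Hle. rewrite pow1 in Hle. nra.
Qed.

Lemma RInt_sqrt_dispersion_le (L : list nat) (M : nat) (a : R) :
  In 0%nat L -> (forall d, In d L -> (d <= M)%nat) -> 0 <= a <= 1 ->
  RInt (fun t => sqrt (dispersion L t / moment 0 L t ^ 2)) a 1
  <= 2 * INR (length L) * INR M * (1 - a).
Proof.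
  intros H0 HM Ha.
  assert (Hint : is_RInt (majorant L) a 1 (majorant_primitive L 1 - majorant_primitive L a)).
  { apply (is_RInt_derive (majorant_primitive L)); intros x _.
    - apply (lsum_derive L (fun d s => 2 * s ^ d)). intros d.
      apply is_derive_scal, is_derive_Reals, derivable_pt_lim_pow.
    - apply (lsum_continuous L (fun d s => 2 * (INR d * s ^ pred d))). intros d.
      apply (continuous_mult (fun _ => 2)); [apply continuous_const | apply continuous_scal_pow]. }
  apply Rle_trans with (RInt (majorant L) a 1).
  { apply RInt_le; [lra | | exists (majorant_primitive L 1 - majorant_primitive L a); exact Hint |].
    - apply ex_RInt_sqrt_dispersion, H0.
    - intros t Ht. rewrite <- (sqrt_pow2 (majorant L t)).
      + apply sqrt_le_1_alt, dispersion_div_le; [exact H0 | lra].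
      + apply lsum_nonneg. intros d. pose proof (pos_INR d).
        assert (0 <= t ^ pred d) by (apply pow_le; lra). nra. }
  rewrite (is_RInt_unique _ _ _ _ Hint).
  unfold majorant_primitive. rewrite <- lsum_minus.
  replace (2 * INR (length L) * INR M * (1 - a)) with (lsum L (fun _ => 2 * (INR M * (1 - a))))
    by (rewrite lsum_const; ring).
  apply lsum_le. intros d Hd. rewrite pow1.
  apply Rle_trans with (2 * (INR d * (1 - a))).
  - pose proof (one_sub_pow_le a d Ha). lra.
  - apply Rmult_le_compat_l; [lra|]. apply Rmult_le_compat_r; [lra|]. apply le_INR, HM, Hd.
Qed.

Theorem lemma6p1 (S : list nat) (b : R) (dl ddl : R -> R) :
  NoDup S -> S <> nil -> 1 <= b ->
  log_derivs (gS S) dl ddl ->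
  exists pr : Riemann_integrable (fun t => sqrt (Iop dl ddl t)) (1 - 1 / b) 1,
    RiemannInt pr <= 2 * (INR (length S) + 1) * INR (maxS S) / b.
Proof.
  intros _ HS Hb Hlog.
  destruct (exists_list_min S HS) as [m [Hm Hmin]].
  set (a := 1 - 1 / b).
  assert (Hinvb : 0 < / b <= 1)
    by (split; [apply Rinv_0_lt_compat | rewrite <- Rinv_1; apply Rinv_le_contravar]; lra).
  assert (Ha : 0 <= a <= 1) by (unfold a, Rdiv; lra).
  assert (Hext : forall t, Rmin a 1 < t < Rmax a 1 ->
    sqrt (dispersion (shift m S) t / moment 0 (shift m S) t ^ 2) = sqrt (Iop dl ddl t)).
  { intros t Ht. rewrite Rmin_left in Ht by lra. rewrite (Iop_gS S m Hm Hmin); auto. lra. }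
  assert (Hex : ex_RInt (fun t => sqrt (Iop dl ddl t)) a 1)
    by (eapply ex_RInt_ext; [exact Hext | apply ex_RInt_sqrt_dispersion, In_0_shift, Hm]).
  exists (ex_RInt_Reals_0 _ _ _ Hex).
  rewrite <- RInt_Reals, <- (RInt_ext _ _ _ _ Hext).
  eapply Rle_trans.
  { apply RInt_sqrt_dispersion_le; [apply In_0_shift, Hm | apply shift_le_maxS | exact Ha]. }
  unfold shift. rewrite length_map.
  replace (1 - a) with (1 / b) by (unfold a; ring).
  pose proof (pos_INR (maxS S)). unfold Rdiv in *. nra.
Qed.
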